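(* Let $K$ be a field, $\kappa$ an infinite cardinal, and $R=R(\kappa,K)$ the $K$-subalgebra of $K^\kappa$ consisting of all sequences that are constant except for finitely many terms. Regard $K^\kappa$ as a right $R$-module via componentwise multiplication. For each cardinal $\aleph_0\le\lambda\le\kappa^+$ let $M_\lambda$ be the submodule of $K^\kappa$ consisting of those elements whose support has cardinality $<\lambda$. Then $M_{\aleph_0}=\mathrm{Soc}(R)$, $M_{\kappa^+}=K^\kappa$, $M_\lambda\subsetneq M_\mu$ for all cardinals $\aleph_0\le\lambda<\mu\le\kappa^+$, and $M_\lambda=\bigcup_{\mu<\lambda}M_\mu$ for every limit cardinal $\lambda$ with $\aleph_0<\lambda\le\kappa^+$ (so the chain is continuous). Moreover: (i) $\gamma(R)=\kappa^+$; (ii) for each cardinal $\aleph_0\le\lambda\le\kappa$, the module $M_\lambda$ is strictly $\lambda$-injective; (iii) $M_{\kappa^+}=K^\kappa$ is injective.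
   Context: For a ring $R$ and an infinite cardinal $\lambda$, a right $R$-module $M$ is $\lambda$-injective if for every right ideal $I$ of $R$ generated by fewer than $\lambda$ elements and every homomorphism $\varphi: I\to M$ there is a homomorphism $\psi:R\to M$ with $\psi\restriction I=\varphi$. $M$ is strictly $\lambda$-injective if it is $\lambda$-injective but not $\lambda^+$-injective. $\gamma(R)$ is the least infinite cardinal $\lambda$ such that every right ideal of $R$ is generated by fewer than $\lambda$ elements. The support of $r\in K^\kappa$ is $\{\alpha<\kappa\mid r_\alpha\neq 0\}$. *)

From HB Require Import structures.
From mathcomp Require Import all_boot all_order all_algebra.
From mathcomp Require Import boolp classical_sets functions cardinality.
Set Implicit Arguments. Unset Strict Implicit. Unset Printing Implicit Defensive.
Import Order.TTheory GRing.Theory.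
Local Open Scope classical_set_scope.
Local Open Scope card_scope.
Local Open Scope ring_scope.

Section Defs.
Variables (K : fieldType) (I : Type).
(* K^kappa is modelled as I -> K, where the type I has cardinality kappa. *)
Notation V := (I -> K).

Definition vzero : V := fun _ => 0.
Definition vadd (x y : V) : V := fun i => x i + y i.
Definition vmul (x r : V) : V := fun i => x i * r i.

Definition Rset : set V := [set r | exists c : K, finite_set [set i | r i != c]].

Definition support (x : V) : set I := [set i | x i != 0].

Definition right_ideal (J : set V) : Prop :=
  J `<=` Rset /\ J vzero /\ (forall x y, J x -> J y -> J (vadd x y)) /\
  (forall x r, J x -> Rset r -> J (vmul x r)).

Definition gen_ideal (G : set V) : set V :=
  [set x | forall J, right_ideal J -> G `<=` J -> J x].

Definition minimal_right_ideal (J : set V) : Prop :=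
  right_ideal J /\ J <> [set vzero] /\
  (forall J', right_ideal J' -> J' `<=` J -> J' = [set vzero] \/ J' = J).

Definition Soc : set V :=
  gen_ideal (\bigcup_(J in minimal_right_ideal) J).

(* Cardinals in [aleph_0, kappa^+] are encoded: [Crd L] is the cardinal |L|
   for an (infinite) L : set I, and [Plus] is kappa^+. *)
Inductive kcard := Crd of set I | Plus.

Definition lt_card (T : Type) (S : set T) (l : kcard) : Prop :=
  match l with
  | Crd L => S #<= L /\ ~ (L #<= S)
  | Plus => S #<= [set: I]   (* |S| < kappa^+  iff  |S| <= kappa *)
  end.

Definition kcard_lt (l m : kcard) : Prop :=
  match l with Crd L => lt_card L m | Plus => False end.

Definition kcard_ok (l : kcard) : Prop :=
  match l with Crd L => infinite_set L | Plus => True end.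

Definition kcard_limit (l : kcard) : Prop :=
  kcard_ok l /\ forall m, kcard_ok m -> kcard_lt m l ->
    exists n, kcard_ok n /\ kcard_lt m n /\ kcard_lt n l.

Definition Msub (l : kcard) : set V := [set x | lt_card (support x) l].

Definition hom_on (J M : set V) (phi : V -> V) : Prop :=
  (forall x, J x -> M (phi x)) /\
  (forall x y, J x -> J y -> phi (vadd x y) = vadd (phi x) (phi y)) /\
  (forall x r, J x -> Rset r -> phi (vmul x r) = vmul (phi x) r).

Definition gen_by (small : set V -> Prop) (J : set V) : Prop :=
  exists G, G `<=` Rset /\ small G /\ J = gen_ideal G.

Definition ext_injective (small : set V -> Prop) (M : set V) : Prop :=
  forall J, right_ideal J -> gen_by small J ->
  forall phi, hom_on J M phi ->
  exists psi, hom_on Rset M psi /\ (forall x, J x -> psi x = phi x).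

Definition lam_injective (l : kcard) (M : set V) : Prop :=
  ext_injective (fun G => lt_card G l) M.

(* strictly lambda-injective, lambda = |L|: lambda-injective but not
   lambda^+-injective (fewer than lambda^+ generators = at most |L|) *)
Definition strictly_lam_injective (L : set I) (M : set V) : Prop :=
  lam_injective (Crd L) M /\ ~ ext_injective (fun G => G #<= L) M.

(* injective (Baer's criterion: extension from every right ideal) *)
Definition injective_mod (M : set V) : Prop :=
  ext_injective (fun _ => True) M.

Definition gamma_is (l : kcard) : Prop :=
  kcard_ok l /\
  (forall J, right_ideal J -> gen_by (fun G => lt_card G l) J) /\
  (forall m, kcard_ok m -> kcard_lt m l ->
     exists J, right_ideal J /\ ~ gen_by (fun G => lt_card G m) J).

End Defs.
Arguments Plus {I}.

From Pilot Require Import Defs.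
From mathcomp Require Import all_boot all_order all_algebra.
From mathcomp Require Import boolp classical_sets functions cardinality.
Local Open Scope classical_set_scope.
Local Open Scope card_scope.

(* Each x in a right ideal J generates the same right ideal as the idempotent
   chi (support x) = x * x^-1 (pointwise inverse), so a homomorphism
   phi : J -> K^I is multiplication by one element m, glued from the values
   phi (chi (support x)), which agree wherever two supports overlap.  The
   extension r |-> m r of phi lands in M_lambda as soon as support m is small:
   if J has fewer than lambda generators, either some generator g0 has
   cofinite support and support m lies in that of phi (chi (support g0)) up to a
   finite set, or all generators are finitely supported and fewer than lambda
   finite sets cover support m, using |A x N| = |A| for infinite A.
   Conversely the finitely supported functions on a set L of size lambda form
   a right ideal needing lambda generators, and the identity of the ideal
   generated by the chi {j}, j in L, does not extend into M_lambda, since the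
   image of 1 would have support containing L. *)

Set Implicit Arguments. Unset Strict Implicit. Unset Printing Implicit Defensive.
Import GRing.Theory.

(* ssralg's [support] notation would otherwise shadow [Defs.support]. *)
Local Notation support := Defs.support.

(** * Cardinal arithmetic *)

Lemma card_le_set_inj T U (A : set T) (B : set U) (f : T -> U) :
  set_fun A B f -> set_inj A f -> A #<= B.
Proof.
move=> fAB finj; elim/Ppointed: U => U in B f fAB finj *.
  have -> : A = set0 by apply/seteqP; split=> // x Ax; exact: (no (f x)).
  exact: card_ge0.
by apply/pcard_leP/injfunPex; exists f.
Qed.

Lemma card_le_inj T U (A : set T) (B : set U) : A !=set0 -> A #<= B ->
  exists2 f : T -> U, set_fun A B f & set_inj A f.
Proof.
move=> [a Aa]; elim/Ppointed: U => U in B *.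
  by rewrite (empty_eq0 B) => /card_le0P A0; move: Aa; rewrite A0.
by move=> /pcard_leP/injfunPex.
Qed.

Lemma card_le_setXnat T U (A : set T) (B : set U) :
  A #<= B -> A `*` [set: nat] #<= B `*` [set: nat].
Proof.
have [->|/set0P A0] := eqVneq A set0; first by rewrite set0X => _; exact: card_ge0.
move=> /(card_le_inj A0)[f fAB finj].
apply: (@card_le_set_inj _ _ _ _ (fun z => (f z.1, z.2))).
  by move=> z [Az _]; split=> //; exact: fAB.
move=> [a n] [b m] /set_mem[Aa _] /set_mem[Ab _] /= [fab ->].
by rewrite (finj a b) ?inE.
Qed.

Lemma card_nat_setXnat T (C : set T) : C #= [set: nat] -> C `*` [set: nat] #<= C.
Proof.
move=> /card_eqPle[CN NC]; apply: card_le_trans (card_le_setXnat CN) _.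
rewrite setXTT; apply: card_le_trans NC.
by move: card_nat2; rewrite card_eq_le => /andP[].
Qed.

Lemma card_eq_nat_neq0 T (C : set T) : C #= [set: nat] -> C !=set0.
Proof.
by move=> CN; apply: infinite_setN0; rewrite (eq_finite_set CN); exact: infinite_nat.
Qed.

Lemma infinite_set_sub_nat T (A : set T) : infinite_set A ->
  exists2 C, C `<=` A & C #= [set: nat].
Proof.
move=> /infiniteP/(card_le_inj (ex_intro _ 0%N I))[g gA ginj].
by exists (g @` setT); [move=> _ [n _ <-]; exact: gA | exact: inj_card_eq].
Qed.

Definition nat_blocks T (A : set T) (F : set (set T)) :=
  (forall C, F C -> C `<=` A /\ C #= [set: nat]) /\ trivIset F id.

Lemma exists_nat_blocks T (A : set T) :
  exists2 F, nat_blocks A F & finite_set (A `\` \bigcup_(C in F) C).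
Proof.
have [F [FA Fmax]] : exists F, nat_blocks A F /\ forall G, F `<` G -> ~ nat_blocks A G.
  apply: Zorn_bigcup => FF FFA Ftot; split.
    by move=> C [X /FFA[+ _] XC]; apply.
  move=> C D [X FFX XC] [Y FFY YD].
  have [XY|YX] := Ftot X Y FFX FFY.
    exact: (FFA Y FFY).2 (XY _ XC) YD.
  exact: (FFA X FFX).2 XC (YX _ YD).
exists F => //; have [Fsub Fdisj] := FA.
apply: contrapT => /infinite_set_sub_nat[C CA CN].
have CF D : F D -> C `&` D = set0.
  by move=> FD; apply/seteqP; split=> // x [/CA[_ nU] Dx]; apply: nU; exists D.
apply: (Fmax (C |` F)).
  split=> [D FD|]; first by right.
  move=> FC; have [x Cx] := card_eq_nat_neq0 CN; have [_] := CA x Cx; apply.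
  by exists C => //; apply: FC; left.
split=> [D [->|/Fsub] //|]; first by split=> // x /CA[].
move=> D E [->|FD] [->|FE] //; last exact: Fdisj.
  by rewrite CF // => -[].
by rewrite setIC CF // => -[].
Qed.

Lemma nat_blocks_setXnat T (A : set T) F : nat_blocks A F ->
  (\bigcup_(C in F) C) `*` [set: nat] #<= \bigcup_(C in F) C.
Proof.
move=> [Fsub Fdisj].
have inj_block C : exists f : T * nat -> T, F C ->
    set_fun (C `*` [set: nat]) C f /\ set_inj (C `*` [set: nat]) f.
  have [FC|nFC] := pselect (F C); last by exists fst => /nFC.
  have [_ CN] := Fsub C FC; have [c Cc] := card_eq_nat_neq0 CN.
  have [f fC finj] := card_le_inj (ex_intro _ (c, 0%N) (conj Cc I)) (card_nat_setXnat CN).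
  by exists f.
have [j jinj] := choice inj_block.
have block x : exists C, (\bigcup_(C in F) C) x -> F C /\ C x.
  by have [[C FC Cx]|nU] := pselect ((\bigcup_(C in F) C) x); [exists C|exists set0 => /nU].
have [b bP] := choice block.
apply: (@card_le_set_inj _ _ _ _ (fun z => j (b z.1) z)).
  move=> z [/bP[Fbz bzz] _]; exists (b z.1) => //.
  by apply: (jinj _ Fbz).1.
move=> z w /set_mem[/bP[Fz zz] _] /set_mem[/bP[Fw ww] _] jzw.
have bzw : b z.1 = b w.1.
  apply: Fdisj => //; exists (j (b w.1) w); split; last exact: (jinj _ Fw).1.
  by rewrite -jzw; apply: (jinj _ Fz).1.
rewrite -bzw in jzw ww.
by apply: (jinj _ Fz).2 _ _ _ _ jzw; rewrite inE.
Qed.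

Lemma card_le_setXnat_finite_setD T (A U : set T) : U !=set0 ->
  finite_set (A `\` U) -> A #<= U `*` [set: nat].
Proof.
move=> [u Uu] /finite_set_countable/countable_injP[r rinj].
pose f x := if `[< U x >] then (x, 0%N) else (u, (r x).+1).
apply: (@card_le_set_inj _ _ _ _ f) => [x _|x y /set_mem Ax /set_mem Ay]; rewrite /f.
  by case: asboolP.
case: asboolP => Ux; case: asboolP => Uy // [] //.
by move=> rxy; apply: rinj => //; rewrite inE.
Qed.

Lemma infinite_setXnat T (A : set T) : infinite_set A -> A `*` [set: nat] #<= A.
Proof.
move=> Ainf; have [F FA restfin] := exists_nat_blocks A.
have UA : \bigcup_(C in F) C `<=` A by move=> x [C /FA.1[+ _] Cx]; apply.
have U0 : (\bigcup_(C in F) C) !=set0.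
  by apply/set0P/negP => /eqP U0; apply: Ainf; move: restfin; rewrite U0 setD0.
apply: card_le_trans (card_le_setXnat (card_le_setXnat_finite_setD U0 restfin)) _.
apply: card_le_trans (card_le_setXnat (nat_blocks_setXnat FA)) _.
apply: card_le_trans (nat_blocks_setXnat FA) _.
exact: subset_card_le.
Qed.

Lemma card_bigcup_finite_le T U (G : set U) (F : U -> set T) :
  (forall g, G g -> finite_set (F g)) -> \bigcup_(g in G) F g #<= G `*` [set: nat].
Proof.
move=> Gfin; set S := \bigcup_(g in G) F g.
have [->|/set0P[_ [g0 _ _]]] := eqVneq S set0; first exact: card_ge0.
have index x : exists g, S x -> G g /\ F g x.
  by have [[g Gg Fgx]|nSx] := pselect (S x); [exists g|exists g0 => /nSx].
have [p pP] := choice index.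
have code g : exists r : T -> nat, G g -> set_inj (F g) r.
  have [Gg|nGg] := pselect (G g); last by exists (fun=> 0%N) => /nGg.
  by have /countable_injP[r rinj] := finite_set_countable (Gfin g Gg); exists r.
have [r rP] := choice code.
apply: (@card_le_set_inj _ _ _ _ (fun x => (p x, r (p x) x))).
  by move=> x /pP[Gpx _].
move=> x y /set_mem/pP[Gx Fx] /set_mem/pP[Gy Fy] [pxy rxy].
rewrite -pxy in rxy Fy.
by apply: (rP _ Gx) _ _ _ _ rxy; rewrite inE.
Qed.

Section LtCard.
Variables (I : Type) (L : set I).

Lemma lt_card_le T T' (S : set T) (X : set T') (l : kcard I) :
  S #<= X -> lt_card X l -> lt_card S l.
Proof.
case: l => [M|] SX /=; last exact: card_le_trans.
by move=> [XM nMX]; split=> [|MS]; [exact: card_le_trans XM|apply/nMX/(card_le_trans MS)].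
Qed.

Hypothesis Linf : infinite_set L.

Lemma lt_card_finite T (S : set T) : finite_set S -> lt_card S (Crd L).
Proof.
move=> /[dup] Sfin [n /card_eqPle[Sn _]]; split=> [|/card_le_finite LS]; last exact/Linf/LS.
apply: card_le_trans Sn (card_le_trans _ (proj1 (infiniteP L) Linf)).
exact: subset_card_le.
Qed.

Lemma lt_card_bigcup_finite T U (G : set U) (F : U -> set T) :
  lt_card G (Crd L) -> (forall g, G g -> finite_set (F g)) ->
  lt_card (\bigcup_(g in G) F g) (Crd L).
Proof.
move=> GL Gfin; have [Gfinite|Ginf] := pselect (finite_set G).
  exact/lt_card_finite/bigcup_finite.
apply: lt_card_le GL; apply: card_le_trans (card_bigcup_finite_le Gfin) _.
exact: infinite_setXnat.
Qed.

Lemma lt_card_setU_finite T (X F : set T) :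
  lt_card X (Crd L) -> finite_set F -> lt_card (X `|` F) (Crd L).
Proof.
move=> XL Ffin; have [Xfin|Xinf] := pselect (finite_set X).
  by apply: lt_card_finite; rewrite finite_setU.
apply: lt_card_le XL; apply: card_le_trans (infinite_setXnat Xinf).
apply: card_le_setXnat_finite_setD; first exact: infinite_setN0.
by apply: sub_finite_set Ffin => x [[]].
Qed.

End LtCard.

(** * The ring R(kappa, K) and its right ideals *)

Section FunctionRing.
Variables (K : fieldType) (I : Type).
Local Open Scope ring_scope.
Local Notation V := (I -> K).
Local Notation R := (@Rset K I).
Local Notation vzero := (@vzero K I).

Definition chi (S : set I) : V := fun i => if `[< S i >] then 1 else 0.

Definition pinv (x : V) : V := fun i => (x i)^-1.

Lemma chi_in S i : S i -> chi S i = 1.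
Proof. by rewrite /chi; case: asboolP. Qed.

Lemma chi_notin S i : ~ S i -> chi S i = 0.
Proof. by rewrite /chi; case: asboolP. Qed.

Lemma vmulC (x y : V) : vmul x y = vmul y x.
Proof. by apply/funext => i; rewrite /vmul mulrC. Qed.

Lemma vmulA (x y z : V) : vmul x (vmul y z) = vmul (vmul x y) z.
Proof. by apply/funext => i; rewrite /vmul mulrA. Qed.

Lemma vmul1 (x : V) : vmul (cst 1) x = x.
Proof. by apply/funext => i; rewrite /vmul mul1r. Qed.

Lemma vmulDr (x y z : V) : vmul x (vadd y z) = vadd (vmul x y) (vmul x z).
Proof. by apply/funext => i; rewrite /vmul /vadd mulrDr. Qed.

Lemma vmul_chi_setC S (x : V) : vadd (vmul (chi S) x) (vmul (chi (~` S)%classic) x) = x.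
Proof.
apply/funext => i; rewrite /vadd /vmul; have [Si|nSi] := pselect (S i).
  by rewrite chi_in // chi_notin ?mul1r ?mul0r ?addr0.
by rewrite chi_notin // chi_in ?mul1r ?mul0r ?add0r.
Qed.

Lemma support_chi S : support (chi S) = S.
Proof.
by apply/seteqP; split=> i; rewrite /support /= /chi; case: asboolP;
  rewrite ?eqxx ?oner_neq0.
Qed.

Lemma support_vzero : support vzero = set0.
Proof. by apply/seteqP; split=> i //; rewrite /support /= eqxx. Qed.

Lemma support_vadd (x y : V) : support (vadd x y) `<=` support x `|` support y.
Proof.
move=> i; rewrite /support /vadd /=; have [xi0|] := eqVneq (x i) 0; last by left.
by rewrite xi0 add0r; right.
Qed.

Lemma support_vmul (x r : V) : support (vmul x r) = support x `&` support r.
Proof. by apply/seteqP; split=> i; rewrite /support /vmul /= mulf_eq0 negb_or => /andP. Qed.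

Lemma support_vmul_chi S (x : V) : support (vmul (chi S) x) = S `&` support x.
Proof. by rewrite support_vmul support_chi. Qed.

Lemma Rset_finite_support (x : V) : finite_set (support x) -> R x.
Proof. by exists 0. Qed.

Lemma Rset_chi_finite S : finite_set S -> R (chi S).
Proof. by move=> Sfin; apply: Rset_finite_support; rewrite support_chi. Qed.

Lemma Rset_support (x : V) : R x -> finite_set (support x) \/ cofinite_set (support x).
Proof.
move=> [c cfin]; have [c0|cn0] := eqVneq c 0; [left|right]; first by move: cfin; rewrite c0.
by apply: sub_finite_set cfin => i /= /negP; rewrite negbK => /eqP->; rewrite eq_sym.
Qed.

Lemma Rset_pointwise2 (op : K -> K -> K) (x y : V) :
  R x -> R y -> R (fun i => op (x i) (y i)).
Proof.
move=> [c cfin] [d dfin]; exists (op c d).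
apply: sub_finite_set (_ : finite_set ([set i | x i != c] `|` [set i | y i != d])).
  move=> i /=; have [->|] := eqVneq (x i) c; last by left.
  by have [->|] := eqVneq (y i) d; [rewrite eqxx|right].
by rewrite finite_setU.
Qed.

Lemma Rset_vadd (x y : V) : R x -> R y -> R (vadd x y).
Proof. exact: Rset_pointwise2. Qed.

Lemma Rset_vmul (x y : V) : R x -> R y -> R (vmul x y).
Proof. exact: Rset_pointwise2. Qed.

Lemma Rset_pinv (x : V) : R x -> R (pinv x).
Proof.
move=> [c cfin]; exists c^-1; apply: sub_finite_set cfin => i /=.
by apply: contraNneq; rewrite /pinv => ->.
Qed.

Lemma Rset_cst (c : K) : R (cst c).
Proof. by exists c; apply: sub_finite_set (finite_set0 I) => i /=; rewrite eqxx. Qed.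

Lemma right_ideal_Rset : right_ideal R.
Proof.
split=> //; split; first by apply: Rset_finite_support; rewrite support_vzero.
by split; [exact: Rset_vadd|exact: Rset_vmul].
Qed.

Lemma vmul_pinv (x : V) : vmul x (pinv x) = chi (support x).
Proof.
apply/funext => i; rewrite /vmul /pinv; have [xi0|xi0] := eqVneq (x i) 0.
  by rewrite chi_notin ?xi0 ?mul0r // /support /= xi0 eqxx.
by rewrite chi_in ?mulfV.
Qed.

Lemma vmul_chi_sub S (x : V) : support x `<=` S -> vmul (chi S) x = x.
Proof.
move=> xS; apply/funext => i; rewrite /vmul; have [xi0|xi0] := eqVneq (x i) 0.
  by rewrite xi0 mulr0.
by rewrite chi_in ?mul1r //; exact: xS.
Qed.

Lemma vmul_chi_support (x : V) : vmul (chi (support x)) x = x.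
Proof. exact: vmul_chi_sub. Qed.

Section RightIdeal.
Variable J : set V.
Hypothesis J_ideal : right_ideal J.

Lemma ideal_sub_Rset : J `<=` R.
Proof. by case: J_ideal. Qed.

Lemma ideal0 : J vzero.
Proof. by case: J_ideal => _ []. Qed.

Lemma idealD x y : J x -> J y -> J (vadd x y).
Proof. by case: J_ideal => _ [_ [+ _]]; apply. Qed.

Lemma idealM x r : J x -> R r -> J (vmul x r).
Proof. by case: J_ideal => _ [_ [_]]; apply. Qed.

Lemma ideal_chi_support x : J x -> J (chi (support x)).
Proof.
by move=> Jx; rewrite -vmul_pinv; apply: idealM => //; exact/Rset_pinv/ideal_sub_Rset.
Qed.

Lemma ideal_support_sub x y : J x -> R y -> support y `<=` support x -> J y.
Proof.
move=> Jx Ry yx; rewrite -(vmul_chi_sub yx) -vmul_pinv -vmulA.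
by apply: idealM => //; apply: Rset_vmul => //; exact/Rset_pinv/ideal_sub_Rset.
Qed.

End RightIdeal.

Lemma sub_gen_ideal (G : set V) : G `<=` gen_ideal G.
Proof. by move=> g Gg J _; apply. Qed.

Lemma gen_ideal_sub (G J : set V) : right_ideal J -> G `<=` J -> gen_ideal G `<=` J.
Proof. by move=> J_ideal GJ x; apply. Qed.

Lemma right_ideal_gen_ideal (G : set V) : G `<=` R -> right_ideal (gen_ideal G).
Proof.
move=> GR; split; first exact: gen_ideal_sub right_ideal_Rset GR.
split; first by move=> J J_ideal _; exact: ideal0.
split=> [x y Gx Gy|x r Gx Rr] J J_ideal GJ.
  by apply: idealD => //; [exact: Gx|exact: Gy].
by apply: idealM => //; exact: Gx.
Qed.

Lemma support_gen_ideal (G : set V) x : G `<=` R -> gen_ideal G x ->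
  support x `<=` \bigcup_(g in G) support g.
Proof.
move=> GR Gx; pose J := [set y | R y /\ support y `<=` \bigcup_(g in G) support g].
suff J_ideal : right_ideal J.
  by apply: (Gx J J_ideal _).2 => g Gg; split; [exact: GR|move=> i gi; exists g].
split; first by move=> y [].
split; first by split; [exact: ideal0 right_ideal_Rset|rewrite support_vzero].
split=> [y z [Ry yG] [Rz zG]|y r [Ry yG] Rr]; split.
- exact: Rset_vadd.
- by move=> i /support_vadd[/yG|/zG].
- exact: Rset_vmul.
- by move=> i; rewrite support_vmul => -[/yG].
Qed.

Definition finsupp (S : set I) : set V :=
  [set x | finite_set (support x) /\ support x `<=` S].

Lemma right_ideal_finsupp S : right_ideal (finsupp S).
Proof.
split; first by move=> x [xfin _]; exact: Rset_finite_support.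
split; first by rewrite /finsupp /= support_vzero; split; [exact: finite_set0|].
split=> [x y [xfin xS] [yfin yS]|x r [xfin xS] _]; split.
- by apply: sub_finite_set (@support_vadd x y) _; rewrite finite_setU.
- by move=> i /support_vadd[/xS|/yS].
- by rewrite support_vmul; exact: finite_setIl.
- by rewrite support_vmul => i [/xS].
Qed.

Lemma chi1_finsupp i : finsupp [set i] (chi [set i]).
Proof. by rewrite /finsupp /= support_chi; split; [exact: finite_set1|]. Qed.

Lemma finsupp1_sub J x i : right_ideal J -> J x -> x i != 0 -> finsupp [set i] `<=` J.
Proof.
move=> J_ideal Jx xi y [yfin yi]; apply: (ideal_support_sub J_ideal Jx).
  exact: Rset_finite_support.
by move=> j /yi ->.
Qed.

Lemma finsupp_sub_ideal J S : right_ideal J -> (forall i, S i -> J (chi [set i])) ->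
  finsupp S `<=` J.
Proof.
move=> J_ideal SJ x [[n]]; elim: n x => [|n IHn] x; last first.
  move=> /[dup] xn /eq_cardSP[a xa xan] xS; rewrite -(vmul_chi_setC [set a] x).
  apply: (idealD J_ideal).
    by apply: (idealM J_ideal (SJ a (xS a xa))); exists 0; exists n.+1.
  apply: IHn; rewrite support_vmul_chi setIC -setDE //.
  by move=> i [/xS].
rewrite II0 card_eq0 => /eqP x0 _; apply: (ideal_support_sub J_ideal (ideal0 J_ideal)).
  by apply: Rset_finite_support; rewrite x0; exact: finite_set0.
by rewrite x0.
Qed.

Lemma finsupp1_neq0 i : finsupp [set i] <> [set vzero].
Proof.
move=> e; have := chi1_finsupp i; rewrite e => /(congr1 (@^~ i)).
by rewrite chi_in // => /eqP; rewrite oner_eq0.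
Qed.

Lemma minimal_right_ideal_finsupp1 i : minimal_right_ideal (finsupp [set i]).
Proof.
split; first exact: right_ideal_finsupp.
split=> [|J J_ideal Jsub]; first exact: finsupp1_neq0.
have [[y [Jy yi]]|nJ] := pselect (exists y, J y /\ y i != 0).
  by right; apply/seteqP; split=> //; exact: finsupp1_sub J_ideal Jy yi.
left; apply/seteqP; split=> [y Jy|_ ->]; last exact: ideal0.
apply/funext => j; have [//|yj] := eqVneq (y j) 0.
by case: nJ; exists y; rewrite -((Jsub _ Jy).2 j yj).
Qed.

Lemma minimal_right_ideal_sub J : minimal_right_ideal J -> J `<=` finsupp setT.
Proof.
move=> [J_ideal [Jn0 Jmin]].
have [x Jx [i xi]] : exists2 x, J x & exists i, x i != 0.
  apply: contrapT => nJ; apply: Jn0; apply/seteqP; split=> [x Jx|_ ->]; last exact: ideal0.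
  apply/funext => i; apply/eqP; apply: contraT => xi.
  by case: nJ; exists x => //; exists i.
have := Jmin _ (right_ideal_finsupp [set i]) (finsupp1_sub J_ideal Jx xi).
case=> [e|<- y [yfin _] //].
by case: (finsupp1_neq0 e).
Qed.

Lemma Soc_finsupp : @Soc K I = finsupp setT.
Proof.
apply/seteqP; split.
  by apply: gen_ideal_sub (right_ideal_finsupp _) _ => x [J /minimal_right_ideal_sub]; apply.
move=> x xfin J J_ideal Jsub; apply: finsupp_sub_ideal J_ideal _ x xfin => j _.
apply: Jsub; exists (finsupp [set j]); first exact: minimal_right_ideal_finsupp1.
exact: chi1_finsupp.
Qed.

Definition atoms (J : set V) : set I := [set i | J (chi [set i])].

Lemma support_atoms J y : right_ideal J -> J y -> support y `<=` atoms J.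
Proof. by move=> J_ideal Jy i yi; exact: finsupp1_sub J_ideal Jy yi _ (chi1_finsupp i). Qed.

Definition atom_gen (x0 : V) (i : I) : V :=
  chi (if `[< support x0 i >] then support x0 else [set i]).

Lemma ideal_gen_atoms (J : set V) x0 : right_ideal J -> J x0 ->
  (forall y, J y -> finite_set (support y `\` support x0)) ->
  J = gen_ideal (atom_gen x0 @` atoms J).
Proof.
move=> J_ideal Jx0 Jfin; apply/seteqP; split; last first.
  apply: (gen_ideal_sub J_ideal) => _ [i Ji <-]; rewrite /atom_gen.
  by case: asboolP => // _; exact: (ideal_chi_support J_ideal Jx0).
move=> y Jy J' J'_ideal genJ'.
have e0J' : J' (chi (support x0)).
  have [[i x0i]|nx0] := pselect (exists i, support x0 i).
    have : J' (atom_gen x0 i).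
      by apply: genJ'; exists i => //; exact: (support_atoms J_ideal Jx0 x0i).
    by rewrite /atom_gen; case: asboolP.
  have x00 : support x0 = set0 by apply/seteqP; split=> // j x0j; apply: nx0; exists j.
  apply: (ideal_support_sub J'_ideal (ideal0 J'_ideal)); last by rewrite support_chi x00.
  by rewrite x00; apply: Rset_chi_finite; exact: finite_set0.
have atomsJ' i : atoms J i -> J' (chi [set i]).
  move=> Ji; have [x0i|nx0i] := pselect (support x0 i).
    apply: (ideal_support_sub J'_ideal e0J'); first exact/Rset_chi_finite/finite_set1.
    by move=> j; rewrite !support_chi => ->.
  have : J' (atom_gen x0 i) by apply: genJ'; exists i.
  by rewrite /atom_gen; case: asboolP.
rewrite -(vmul_chi_setC (support x0) y); apply: (idealD J'_ideal).
  exact: (idealM J'_ideal e0J' (ideal_sub_Rset J_ideal Jy)).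
apply: (finsupp_sub_ideal J'_ideal atomsJ'); split; rewrite support_vmul_chi setIC.
  exact: Jfin.
by move=> i [/(support_atoms J_ideal Jy)].
Qed.

Lemma right_ideal_gen_by_card_le (J : set V) :
  right_ideal J -> gen_by (fun G => G #<= [set: I]) J.
Proof.
move=> J_ideal.
have [x0 Jx0 Jfin] :
    exists2 x0, J x0 & forall y, J y -> finite_set (support y `\` support x0).
  have [[x0 [Jx0 x0cof]]|nJ] := pselect (exists x0, J x0 /\ cofinite_set (support x0)).
    by exists x0 => // y _; apply: sub_finite_set x0cof => i [].
  exists vzero => [|y Jy]; first exact: ideal0.
  rewrite support_vzero setD0; have [//|ycof] := Rset_support (ideal_sub_Rset J_ideal Jy).
  by case: nJ; exists y.
exists (atom_gen x0 @` atoms J); split; last split; last exact: ideal_gen_atoms.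
  move=> _ [i _ <-]; rewrite /atom_gen; case: asboolP => _.
    exact/(ideal_sub_Rset J_ideal)/(ideal_chi_support J_ideal).
  exact/Rset_chi_finite/finite_set1.
exact: card_le_trans (card_image_le _ _) (card_leT _).
Qed.

Lemma finsupp_not_gen_by_lt L : infinite_set L ->
  ~ gen_by (fun G => lt_card G (Crd L)) (finsupp L).
Proof.
move=> Linf [G [GR [GL e]]].
have Gfin g : G g -> finite_set (support g).
  by move=> Gg; have [] : finsupp L g by rewrite e; exact: sub_gen_ideal.
have LG : L `<=` \bigcup_(g in G) support g.
  move=> i Li; apply: (support_gen_ideal GR (x := chi [set i])); last by rewrite support_chi.
  by rewrite -e /finsupp /= support_chi; split=> [|j ->//]; exact: finite_set1.
have [_] := lt_card_le (subset_card_le LG) (lt_card_bigcup_finite Linf GL Gfin).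
by apply; exact: card_lexx.
Qed.

Lemma gamma_Plus : @gamma_is K I Plus.
Proof.
split=> //; split; first exact: right_ideal_gen_by_card_le.
case=> [M|] //= Minf _; exists (finsupp M); split; first exact: right_ideal_finsupp.
exact: finsupp_not_gen_by_lt.
Qed.

(** * Homomorphisms from right ideals are multiplications *)

Section Multiplier.
Variables (J M : set V) (phi : V -> V).
Hypotheses (J_ideal : right_ideal J) (phi_hom : hom_on J M phi).

Let phiM x r : J x -> R r -> phi (vmul x r) = vmul (phi x) r.
Proof. by case: phi_hom => _ [_]; apply. Qed.

Lemma hom_chi_supportE x : J x -> phi x = vmul (phi (chi (support x))) x.
Proof.
move=> Jx; rewrite -phiM ?vmul_chi_support //; first exact: ideal_chi_support Jx.
exact: ideal_sub_Rset Jx.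
Qed.

(* Evaluate phi (e_x e_y) = phi (e_y e_x) at [i], where e_x = chi (support x)
   and e_y are both 1. *)
Lemma hom_chi_support_agree x y i : J x -> J y -> x i != 0 -> y i != 0 ->
  phi (chi (support x)) i = phi (chi (support y)) i.
Proof.
move=> Jx Jy xi yi; have ex := ideal_chi_support J_ideal Jx.
have ey := ideal_chi_support J_ideal Jy.
have := phiM ex (ideal_sub_Rset J_ideal ey).
rewrite vmulC phiM //; last exact: ideal_sub_Rset ex.
by move=> /(congr1 (fun f => f i)); rewrite /vmul !chi_in // !mulr1 => ->.
Qed.

Definition multiplier : V := fun i =>
  if pselect (exists x, J x /\ x i != 0) is left h
  then phi (chi (support (sval (cid h)))) i else 0.

Lemma multiplierE x i : J x -> x i != 0 -> multiplier i = phi (chi (support x)) i.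
Proof.
move=> Jx xi; rewrite /multiplier; case: pselect => [h|[]]; last by exists x.
by case: (cid h) => /= y [Jy yi]; exact: hom_chi_support_agree.
Qed.

Lemma multiplier_support i : multiplier i != 0 ->
  exists2 x, J x & x i != 0 /\ phi (chi (support x)) i != 0.
Proof.
rewrite /multiplier; case: pselect => [h|_]; last by rewrite eqxx.
by case: (cid h) => /= x [Jx xi] mi; exists x.
Qed.

Lemma vmul_multiplier x : J x -> vmul multiplier x = phi x.
Proof.
move=> Jx; rewrite (hom_chi_supportE Jx); apply/funext => i; rewrite /vmul.
by have [->|xi] := eqVneq (x i) 0; rewrite ?mulr0 ?(multiplierE Jx).
Qed.

End Multiplier.

Lemma hom_on_vmul M m : (forall r, R r -> M (vmul m r)) -> hom_on R M (vmul m).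
Proof.
by move=> mM; split=> //; split=> [x y _ _|x r _ _]; rewrite ?vmulDr ?vmulA.
Qed.

Lemma extend_by_multiplier J M phi : right_ideal J -> hom_on J M phi ->
  (forall r, R r -> M (vmul (multiplier J phi) r)) ->
  exists psi, hom_on R M psi /\ forall x, J x -> psi x = phi x.
Proof.
move=> J_ideal phi_hom mM; exists (vmul (multiplier J phi)).
by split=> [|x]; [exact: hom_on_vmul|exact: vmul_multiplier J_ideal phi_hom x].
Qed.

(** * The modules M_lambda *)

Local Notation Msub := (@Msub K I).

Lemma Msub_vmul l x r : Msub l x -> Msub l (vmul x r).
Proof.
by apply: lt_card_le; apply: subset_card_le; rewrite support_vmul; exact: subIsetl.
Qed.

Lemma Msub_Plus : Msub Plus = setT.
Proof. by apply/seteqP; split=> // x _; exact: card_leT. Qed.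

Lemma Msub_aleph0 L : infinite_set L -> countable L -> Msub (Crd L) = @Soc K I.
Proof.
move=> Linf Lcount; rewrite Soc_finsupp; apply/seteqP; split=> x /=; last first.
  by move=> [xfin _]; exact: lt_card_finite.
move=> [xL nLx]; split=> //; apply: contrapT => xinf; apply: nLx.
have /card_eqPle[_ Nx] := eq_card_nat (card_le_trans xL Lcount) xinf.
exact: card_le_trans Lcount Nx.
Qed.

Lemma Msub_subset l m : kcard_lt l m -> Msub l `<=` Msub m.
Proof. by case: l => [L|] //= Lm x [xL _]; exact: lt_card_le xL Lm. Qed.

Lemma Msub_proper l m : kcard_lt l m -> Msub l <> Msub m.
Proof.
case: l => [L|] // Lm e; have : Msub m (chi L) by rewrite /Msub /= support_chi.
by rewrite -e /Msub /= support_chi => -[_]; apply; exact: card_lexx.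
Qed.

Lemma kcard_limit_Plus : infinite_set [set: I] -> ~ kcard_limit (@Plus I).
Proof.
move=> Iinf [_ lim]; have [n [_ [In nPlus]]] := lim (Crd setT) Iinf (card_lexx _).
by case: n In nPlus => [N|] //= [_ nNI] _; apply: nNI; exact: card_leT.
Qed.

Lemma Msub_limit l : infinite_set [set: I] -> kcard_limit l ->
  (exists m, kcard_ok m /\ kcard_lt m l) ->
  Msub l = \bigcup_(m in [set m | kcard_ok m /\ kcard_lt m l]) Msub m.
Proof.
case: l => [L|] Iinf lim; last by case: (kcard_limit_Plus Iinf lim).
move=> [[M0|] [M0inf M0L]] //; apply/seteqP; split; last first.
  by move=> x [m [_ mL] xm]; exact: Msub_subset mL _ xm.
move=> x xL; have [xfin|xinf] := pselect (finite_set (support x)).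
  by exists (Crd M0) => //; exact: lt_card_finite.
have [n [nok [xn nL]]] := lim.2 (Crd (support x)) xinf xL.
by exists n.
Qed.

Section SmallIdeal.
Variables (L : set I) (G : set V) (phi : V -> V).
Hypotheses (Linf : infinite_set L) (GR : G `<=` R) (GL : lt_card G (Crd L)).
Hypothesis phi_hom : hom_on (gen_ideal G) (Msub (Crd L)) phi.

Let J_ideal := right_ideal_gen_ideal GR.
Let JG : G `<=` gen_ideal G := @sub_gen_ideal G.

Lemma support_multiplier_gen_ideal : support (multiplier (gen_ideal G) phi) `<=`
  [set i | exists2 g, G g & g i != 0 /\ phi (chi (support g)) i != 0].
Proof.
move=> i /multiplier_support[x Jx [xi phixi]].
have [g Gg gi] := support_gen_ideal GR Jx xi.
by exists g => //; rewrite -(hom_chi_support_agree J_ideal phi_hom Jx (JG Gg) xi gi).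
Qed.

Lemma lt_card_support_multiplier :
  lt_card (support (multiplier (gen_ideal G) phi)) (Crd L).
Proof.
apply: lt_card_le (subset_card_le support_multiplier_gen_ideal) _.
have [[g0 Gg0 g0cof]|nG] := pselect (exists2 g0, G g0 & cofinite_set (support g0)).
  have phig0 := phi_hom.1 _ (ideal_chi_support J_ideal (JG Gg0)).
  apply: lt_card_le (lt_card_setU_finite Linf phig0 g0cof).
  apply: subset_card_le => i [g Gg [gi phigi]].
  have [g0i|] := pselect (support g0 i); last by right.
  left; rewrite /support /=.
  by rewrite (hom_chi_support_agree J_ideal phi_hom (JG Gg0) (JG Gg) g0i gi).
have Gfin g : G g -> finite_set (support g).
  by move=> Gg; have [//|gcof] := Rset_support (GR Gg); case: nG; exists g.
apply: lt_card_le (lt_card_bigcup_finite Linf GL Gfin).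
by apply: subset_card_le => i [g Gg [gi _]]; exists g.
Qed.

End SmallIdeal.

Lemma lam_injective_Msub L : infinite_set L -> lam_injective (Crd L) (Msub (Crd L)).
Proof.
move=> Linf J J_ideal [G [GR [GL eJ]]] phi phi_hom; subst J.
apply: (extend_by_multiplier J_ideal phi_hom) => r _; apply: Msub_vmul.
exact: lt_card_support_multiplier.
Qed.

Lemma Msub_not_ext_injective L : infinite_set L ->
  ~ ext_injective (fun G => G #<= L) (Msub (Crd L)).
Proof.
move=> Linf Minj; pose G := (fun j => chi [set j]) @` L.
have GR : G `<=` R by move=> _ [j _ <-]; exact/Rset_chi_finite/finite_set1.
have id_hom : hom_on (gen_ideal G) (Msub (Crd L)) id.
  split=> [x Gx|]; last by split.
  have [xfin _] : finsupp setT x.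
    apply: gen_ideal_sub (right_ideal_finsupp _) _ x Gx => _ [j _ <-].
    by rewrite /finsupp /= support_chi; split; [exact: finite_set1|].
  exact: lt_card_finite.
have [|psi [[psiM [_ psiZ]] psi_id]] := Minj _ (right_ideal_gen_ideal GR) _ id id_hom.
  by exists G; split=> //; split=> //; exact: card_image_le.
have Lpsi : L `<=` support (psi (cst 1)).
  move=> j Lj; have Gj : G (chi [set j]) by exists j.
  have := psiZ (cst 1) _ (Rset_cst 1) (GR _ Gj).
  rewrite vmul1 psi_id; last exact: sub_gen_ideal.
  move=> /(congr1 (@^~ j)); rewrite /vmul chi_in // mulr1 => e.
  by rewrite /support /= -e oner_neq0.
have [_] := psiM _ (Rset_cst 1); apply; exact: subset_card_le Lpsi.
Qed.

Lemma injective_Msub_Plus : injective_mod (Msub Plus).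
Proof.
move=> J J_ideal _ phi phi_hom; apply: (extend_by_multiplier J_ideal phi_hom) => r _.
by rewrite Msub_Plus.
Qed.

End FunctionRing.

Theorem theorem8p2 (K : fieldType) (I : Type) (kappa_inf : infinite_set [set: I]) :
  (* M_{aleph_0} = Soc(R) *)
  (forall L : set I, infinite_set L -> countable L ->
     @Msub K I (Crd L) = @Soc K I) /\
  (* M_{kappa^+} = K^kappa *)
  @Msub K I (@Plus I) = [set: I -> K] /\
  (* strictly increasing chain *)
  (forall l m : kcard I, kcard_ok l -> kcard_ok m -> kcard_lt l m ->
     @Msub K I l `<=` @Msub K I m /\ @Msub K I l <> @Msub K I m) /\
  (* continuity at limit cardinals > aleph_0 *)
  (forall l : kcard I, kcard_limit l ->
     (exists m, kcard_ok m /\ kcard_lt m l) ->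
     @Msub K I l = \bigcup_(m in [set m | kcard_ok m /\ kcard_lt m l]) @Msub K I m) /\
  (* (i) *)
  @gamma_is K I (@Plus I) /\
  (* (ii) *)
  (forall L : set I, infinite_set L ->
     @strictly_lam_injective K I L (@Msub K I (Crd L))) /\
  (* (iii) *)
  @injective_mod K I (@Msub K I (@Plus I)).
Proof.
split; first exact: Msub_aleph0.
split; first exact: Msub_Plus.
split; first by move=> l m _ _ lm; split; [exact: Msub_subset|exact: Msub_proper].
split; first by move=> l; exact: Msub_limit.
split; first exact: gamma_Plus.
split; first by move=> L Linf; split;
  [exact: lam_injective_Msub|exact: Msub_not_ext_injective].
exact: injective_Msub_Plus.
Qed.
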